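(* Let $K\subset\mathbb R^{d_1}$ be compact and $f:K\to\mathbb R^{d_3}$ continuous. For every $\epsilon>0$ there exist $d_2>0$, $W_1\in\mathrm{Mat}(d_2,d_1)$, $W_2\in\mathrm{Mat}(d_3,d_2)$ and $b\in\mathbb R^{d_2}$ such that the function $f^U_{W_1,W_2,b}(x)=W_2\cdot\sigma_{\mathbb R^{d_2}}(W_1x+b)$ satisfies $\|f^U_{W_1,W_2,b}-f\|_{L^2(K)}<\epsilon$.
   Context: For $n\ge1$, $\sigma_{\mathbb R^n}:\mathbb R^n\to\mathbb R^n$ is defined by $\sigma_{\mathbb R^n}(x)_i=\dfrac{e^{2x_i}}{1+\sum_{j=1}^ne^{2x_j}}$, $i=1,\dots,n$ (the softmax on $(0,x_1,\dots,x_n)$ with the $0$-th component dropped; its image is the interior of the standard simplex with vertices $0,\epsilon_1,\dots,\epsilon_n$). The $L^2(K)$-norm is with respect to Lebesgue measure and the Euclidean norm on $\mathbb R^{d_3}$. *)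

From HB Require Import structures.
From mathcomp Require Import all_boot all_order all_algebra.
From mathcomp Require Import all_classical all_reals all_analysis.
Set Implicit Arguments. Unset Strict Implicit. Unset Printing Implicit Defensive.
Import Order.TTheory GRing.Theory Num.Theory.
Import numFieldNormedType.Exports.
Local Open Scope classical_set_scope.
Local Open Scope ring_scope.

(* sigma_{R^n}: softmax on (0, x_1, ..., x_n) with the 0-th component dropped.
   Vectors of R^n are column vectors 'cV[R]_n. *)
Definition sigmaRn {R : realType} {n : nat} (x : 'cV[R]_n) : 'cV[R]_n :=
  \col_i (expR (2 * x i 0) / (1 + \sum_(j < n) expR (2 * x j 0))).

Definition netU {R : realType} {d1 d2 d3 : nat}
  (W1 : 'M[R]_(d2, d1)) (W2 : 'M[R]_(d3, d2)) (b : 'cV[R]_d2)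
  (x : 'cV[R]_d1) : 'cV[R]_d3 :=
  W2 *m sigmaRn (W1 *m x + b).

(* Lebesgue integral on R^n of a function with values in \bar R, realized as
   the iterated one-dimensional Lebesgue integral (Tonelli/Fubini:
   the n-dimensional Lebesgue measure is the n-fold product of the
   one-dimensional one; the only integrands used below are non-negative and
   Borel measurable). *)
Fixpoint lebesgue_int_Rn {R : realType} (n : nat) :
    ('cV[R]_n -> \bar R) -> \bar R :=
  match n return ('cV[R]_n -> \bar R) -> \bar R with
  | 0 => fun F => F 0
  | n'.+1 => fun F =>
      (\int[@lebesgue_measure R]_t
         lebesgue_int_Rn (fun v : 'cV[R]_n' => F (col_mx (t%:M : 'cV[R]_1) v)))%E
  end.

Definition sqnorm2 {R : realType} {n : nat} (y : 'cV[R]_n) : R :=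
  \sum_(i < n) (y i 0) ^+ 2.

Definition L2K_dist {R : realType} {d1 d3 : nat} (K : set 'cV[R]_d1)
  (g f : 'cV[R]_d1 -> 'cV[R]_d3) : \bar R :=
  poweR (lebesgue_int_Rn (fun x => ((\1_K x : R) * sqnorm2 (g x - f x))%:E))
        (2^-1).

From HB Require Import structures.
From mathcomp Require Import all_boot all_order all_algebra.
From mathcomp Require Import all_classical all_reals all_analysis.
From mathcomp Require Import finmap measurable_realfun.
From mathcomp Require Import ring lra.
Set Implicit Arguments. Unset Strict Implicit.
Import Order.TTheory GRing.Theory Num.Theory.
Import numFieldNormedType.Exports.
Local Open Scope classical_set_scope.
Local Open Scope ring_scope.

(** With rows [lam * p i] in [W1] and bias [L - lam * |p i|^2 / 2], the hidden
  layer gives [2 (W1 x + b)_i = lam |x|^2 + 2 L - lam |x - p i|^2], so the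
  softmax weights are Gaussian bumps [exp (- lam |x - p i|^2)] up to a common
  factor and the extra [1] in the denominator.  Taking the [p i] to be a fine
  net of [K] and [W2] the matrix of values [f (p i)], the output is a weighted
  average of the [f (p i)]: a large [lam] concentrates the weight on centres
  close to [x], where [f (p i)] is close to [f x] by uniform continuity, and a
  large [L] makes the extra [1] negligible.  This approximates [f] uniformly
  on [K], and as [K] lies in a cube of finite volume, uniformly close implies
  close in [L^2(K)]. *)

Lemma mx_entry_le_norm (R : realDomainType) m n (x : 'M[R]_(m, n)) i j :
  `|x i j| <= `|x|.
Proof.
rewrite (_ : `|x| = mx_norm x) // mx_normrE.
exact: (le_bigmax 0 (fun ij : 'I_m * 'I_n => `|x ij.1 ij.2|) (i, j)).
Qed.

Section matrix_topology.
Variables (R : realType) (m n : nat).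

Lemma compact_mx_entry_bounded (K : set 'M[R]_(m, n)) : compact K ->
  exists2 B, 0 < B & forall x, K x -> forall i j, `|x i j| <= B.
Proof.
move=> /compact_bounded [M [_ KM]].
exists (`|M| + 1) => [|x Kx i j]; first by rewrite ltr_wpDl.
apply: le_trans (mx_entry_le_norm x i j) (KM _ _ x Kx).
by rewrite (le_lt_trans (ler_norm M)) // ltrDl.
Qed.

Lemma mx_ballP (x y : 'M[R]_(m, n)) e : 0 < e ->
  ball x e y <-> forall i j, `|x i j - y i j| < e.
Proof. by move=> e0; split=> [[_ xy] i j|xy]; [exact: xy | split]. Qed.

End matrix_topology.

Lemma seq_lbound_gt0 (R : realDomainType) (T : eqType) (s : seq T) (g : T -> R) :
  (forall t, t \in s -> 0 < g t) ->
  exists2 d, 0 < d & forall t, t \in s -> d <= g t.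
Proof.
elim: s => [|a s IH] g0; first by exists 1.
have [|d d0 dg] := IH; first by move=> t ts; rewrite g0 // in_cons ts orbT.
exists (Num.min d (g a)) => [|t]; first by rewrite lt_min d0 g0 ?mem_head.
by rewrite in_cons => /orP[/eqP->|ts]; rewrite ge_min ?lexx ?orbT ?dg.
Qed.

Section compact_cover_consequences.
Variables (R : realType) (V : pseudoMetricNormedZmodType R).

Lemma compact_unif_cont (U : pseudoMetricType R) (K : set V) (f : V -> U) :
  compact K -> {within K, continuous f} -> forall e, 0 < e ->
  exists2 d, 0 < d & forall x y, K x -> K y -> ball x d y -> ball (f x) e (f y).
Proof.
move=> + cf e e0; rewrite compact_cover => cK.
have local p : exists d : R, 0 < d /\
    (K p -> forall y, K y -> ball p (d *+ 2) y -> ball (f p) (e / 2) (f y)).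
  have [Kp|nKp] := pselect (K p); last by exists 1; split.
  have e2 : 0 < e / 2 by rewrite divr_gt0.
  have /nbhs_ballP[d /= d0 pd] :=
    (subspace_continuousP K f).1 cf p Kp _ (nbhsx_ballx (f p) _ e2).
  exists (d / 2); split=> [|_ y Ky]; first by rewrite divr_gt0.
  by rewrite mulr2n -splitr => py; exact: (pd y).
have [del delP] := choice local.
have del0 p : 0 < del p := (delP p).1.
have [D DK cov] := cK _ K (fun p => ball p (del p)) (fun p _ => ball_open p (del p))
  (fun x Kx => ex_intro2 K (fun p => ball p (del p) x) x Kx (ballxx _ (del0 x))).
have [d d0 d_le] := @seq_lbound_gt0 R _ (enum_fset D) del (fun p _ => del0 p).
exists d => // x y Kx Ky xy.
have [p /= pD px] := cov x Kx.
have Kp : K p by have := DK p pD; rewrite in_setE.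
apply: (@ball_splitr _ _ (f p)); apply: (delP p).2 => //.
  by apply: le_ball px; rewrite mulr2n lerDl ltW.
by apply: le_ball (ball_triangle px xy); rewrite mulr2n lerD2l d_le.
Qed.

Lemma compact_finite_net (K : set V) : compact K -> K !=set0 ->
  forall r, 0 < r -> exists N, (0 < N)%N /\ exists p : 'I_N -> V,
    (forall i, K (p i)) /\ forall x, K x -> exists i, ball (p i) r x.
Proof.
rewrite compact_cover => cK [x0 Kx0] r r0.
have [D DK cov] := cK _ K (fun p => ball p r) (fun p _ => ball_open p r)
  (fun x Kx => ex_intro2 K (fun p => ball p r x) x Kx (ballxx _ r0)).
set s := enum_fset D.
exists (size s); split.
  by have [p0 /= p0D _] := cov x0 Kx0; move: (p0D : p0 \in s); case: s.
exists (fun i => nth x0 s i); split=> [i|x Kx].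
  by have := DK (nth x0 s i); rewrite in_setE; apply; exact: mem_nth.
have [p /= pD px] := cov x Kx.
have ps : (index p s < size s)%N by rewrite index_mem.
by exists (Ordinal ps) => /=; rewrite nth_index -?index_mem.
Qed.

End compact_cover_consequences.

Section sqnorm2.
Variables (R : realType) (n : nat).
Implicit Types x y p : 'cV[R]_n.

Lemma sqnorm2_ge0 y : 0 <= sqnorm2 y.
Proof. by apply: sumr_ge0 => i _; exact: sqr_ge0. Qed.

Lemma sqnorm2B x p :
  sqnorm2 (x - p) = sqnorm2 x - 2 * \sum_j p j 0 * x j 0 + sqnorm2 p.
Proof.
rewrite /sqnorm2 mulr_sumr -sumrB -big_split /=; apply: eq_bigr => j _.
by rewrite !mxE; ring.
Qed.

Lemma sqr_entry_le_sqnorm2 y j : y j 0 ^+ 2 <= sqnorm2 y.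
Proof.
by rewrite /sqnorm2 (bigD1 j) //= lerDl sumr_ge0 // => i _; exact: sqr_ge0.
Qed.

Lemma sqnorm2_le_entry_bound y e :
  (forall k, `|y k 0| <= e) -> sqnorm2 y <= n%:R * e ^+ 2.
Proof.
move=> ye; rewrite /sqnorm2 mulr_natl -[in leRHS](card_ord n) -sumr_const.
apply: ler_sum => k _; rewrite -real_normK ?num_real //.
by rewrite lerXn2r ?nnegrE ?normr_ge0 // (le_trans (normr_ge0 _) (ye k)).
Qed.

Lemma ball_sqnorm2_le p x r : ball p r x -> sqnorm2 (x - p) <= n%:R * r ^+ 2.
Proof.
move=> px; have r0 : 0 < r by case: px.
apply: sqnorm2_le_entry_bound => k; rewrite !mxE distrC ltW //.
exact: (mx_ballP _ _ r0).1 px k 0.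
Qed.

Lemma sqnorm2_lt_ball p x d : 0 < d -> sqnorm2 (x - p) < d ^+ 2 -> ball p d x.
Proof.
move=> d0 xp; apply/mx_ballP => // i j; rewrite (ord1 j) distrC.
have := le_lt_trans (sqr_entry_le_sqnorm2 (x - p) i) xp.
rewrite !mxE -real_normK ?num_real //.
by rewrite (@ltr_pXn2r _ 2) ?nnegrE ?normr_ge0 ?ltW.
Qed.

End sqnorm2.

Lemma ge0_le_integral_nonmeasurable d (T : measurableType d) (R : realType)
    (mu : {measure set T -> \bar R}) (f g : T -> \bar R) :
  (forall x, 0 <= f x)%E -> (forall x, f x <= g x)%E ->
  (\int[mu]_x f x <= \int[mu]_x g x)%E.
Proof.
move=> f0 fg; have g0 x : (0 <= g x)%E := le_trans (f0 x) (fg x).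
rewrite !ge0_integralE // !patch_setT.
apply: ereal_sup_le => _ [h /= hf <-]; exists h => //= x.
exact: le_trans (hf x) (fg x).
Qed.

Lemma lebesgue_int_Rn_cube_bound (R : realType) (B : R) n :
  0 < B -> forall (c : R) (F : 'cV[R]_n -> \bar R), 0 <= c ->
  (forall x, 0 <= F x <= c%:E)%E ->
  (forall x : 'cV[R]_n, (exists i, B < `|x i 0|) -> F x = 0%E) ->
  (0 <= lebesgue_int_Rn F <= (c * (B *+ 2) ^+ n)%:E)%E.
Proof.
move=> B0; elim: n => [|n IH] c F c0 F0c Fout /=; first by rewrite expr0 mulr1.
set C := c * (B *+ 2) ^+ n.
have C0 : 0 <= C by rewrite mulr_ge0 // exprn_ge0 // mulrn_wge0 // ltW.
set G := fun t => lebesgue_int_Rn _.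
have G_bound t : (0 <= G t <= (C * \1_(`[-B, B]%classic) t)%:E)%E.
  rewrite indicE; have [tB|tB] := boolP (t \in `[-B, B]%classic).
    rewrite mulr1; apply: IH => // x [i Bi].
    by apply: Fout; exists (rshift 1 i); rewrite (col_mxEd (t%:M : 'cV[R]_1) x).
  have Ft0 x : F (col_mx (t%:M : 'cV[R]_1) x) = 0%E.
    apply: Fout; exists (lshift n (ord0 : 'I_1)).
    rewrite (col_mxEu (t%:M : 'cV[R]_1) x) mxE /=.
    by move: tB; rewrite mem_setE in_itv /= -ler_norml -ltNge.
  by rewrite mulr0 -(mul0r ((B *+ 2) ^+ n)); apply: IH => // x; rewrite Ft0 ?lexx.
apply/andP; split; first by apply: integral_ge0 => t _; case/andP: (G_bound t).
apply: (le_trans (@ge0_le_integral_nonmeasurable _ _ _ lebesgue_measure G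
  (fun t => (C * \1_(`[-B, B]%classic) t)%:E) _ _)).
- by move=> t; case/andP: (G_bound t).
- by move=> t; case/andP: (G_bound t).
under eq_integral do rewrite EFinM.
rewrite ge0_integralZl_EFin //; last exact/measurable_EFinP/measurable_indic.
have cube_len : lebesgue_measure (`[-B, B]%classic : set R) = (B *+ 2)%:E.
  by rewrite lebesgue_measure_itv /= lte_fin gtrN // -EFinD opprK -mulr2n.
rewrite integral_indic // setIT [X in (_ * X <= _)%E]cube_len.
by rewrite -EFinM lee_fin exprSr mulrA.
Qed.

Lemma L2K_dist_lt (R : realType) d1 d3 (K : set 'cV[R]_d1)
    (g f : 'cV[R]_d1 -> 'cV[R]_d3) (B c eps : R) :
  0 < B -> (forall x, K x -> forall i j, `|x i j| <= B) -> 0 <= c ->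
  (forall x, K x -> sqnorm2 (g x - f x) <= c) ->
  c * (B *+ 2) ^+ d1 < eps ^+ 2 -> 0 < eps ->
  (L2K_dist K g f < eps%:E)%E.
Proof.
move=> B0 KB c0 gfc cV eps0.
set F := fun x => ((\1_K x : R) * sqnorm2 (g x - f x))%:E.
have : (0 <= lebesgue_int_Rn F <= (c * (B *+ 2) ^+ d1)%:E)%E.
  apply: lebesgue_int_Rn_cube_bound => // x; rewrite /F indicE.
    have [xK|_] := boolP (x \in K); last by rewrite mul0r lexx.
    by rewrite mul1r !lee_fin sqnorm2_ge0 gfc // -in_setE.
  move=> [i Bi]; have [xK|_] := boolP (x \in K); last by rewrite mul0r.
  by move: Bi; rewrite ltNge KB // -in_setE.
rewrite /L2K_dist -/F; case: lebesgue_int_Rn => [r| |] /andP[] //= r0 rV.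
rewrite lte_fin powR12_sqrt // -[ltRHS](gtr0_norm eps0) -sqrtr_sqr.
by rewrite ltr_sqrt ?exprn_gt0 // (le_lt_trans _ cV).
Qed.

Lemma softmax_avg_decomp (R : fieldType) N (E a : 'I_N -> R) v :
  1 + \sum_j E j != 0 ->
  v - \sum_i a i * (E i / (1 + \sum_j E j)) =
  v / (1 + \sum_j E j) + \sum_i (v - a i) * (E i / (1 + \sum_j E j)).
Proof.
set S := \sum_j E j => S1.
have -> : \sum_i (v - a i) * (E i / (1 + S)) =
    v * (S / (1 + S)) - \sum_i a i * (E i / (1 + S)).
  by under eq_bigr do rewrite mulrBl; rewrite sumrB -mulr_sumr -mulr_suml.
by field.
Qed.

Lemma softmax_avg_err (R : realFieldType) N (E a : 'I_N -> R) (v eta Mf T tau : R)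
    (i0 : 'I_N) :
  (forall i, 0 <= E i) -> 0 <= eta -> 0 <= tau ->
  `|v| <= Mf -> (forall i, `|a i| <= Mf) -> 0 < T -> T <= E i0 ->
  (forall i, `|v - a i| < eta \/ E i <= tau * E i0) ->
  `|v - \sum_i a i * (E i / (1 + \sum_j E j))| <=
    Mf / T + eta + N%:R * (Mf *+ 2) * tau.
Proof.
move=> E0 eta0 tau0 vMf aMf T0 TE close_or_small.
set S := \sum_j E j.
have S0 : 0 <= S by apply: sumr_ge0.
have ES : E i0 <= S by rewrite /S (bigD1 i0) //= lerDl sumr_ge0.
have S1 : 0 < 1 + S by rewrite ltr_pwDl.
have Mf0 : 0 <= Mf := le_trans (normr_ge0 v) vMf.
rewrite softmax_avg_decomp ?gt_eqF // -addrA.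
apply: le_trans (ler_normD _ _) _; apply: lerD.
  rewrite normrM normfV (gtr0_norm S1).
  apply: ler_pM => //; first by rewrite invr_ge0 ltW.
  by rewrite lef_pV2 ?posrE // (le_trans TE) // (le_trans ES) // lerDr.
apply: le_trans (ler_norm_sum _ _ _) _.
apply: (@le_trans _ _ (\sum_i (eta * (E i / (1 + S)) + Mf *+ 2 * tau))).
  apply: ler_sum => i _.
  have w0 : 0 <= E i / (1 + S) by rewrite divr_ge0 // ltW.
  have vaMf : `|v - a i| <= Mf *+ 2.
    by rewrite (le_trans (ler_normB _ _)) // mulr2n lerD.
  rewrite normrM (ger0_norm w0).
  case: (close_or_small i) => [close|small].
    by apply: ler_wpDr; rewrite ?mulr_ge0 ?mulrn_wge0 // ler_wpM2r // ltW.
  apply: ler_wpDl; first by rewrite mulr_ge0.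
  apply: le_trans (ler_wpM2r w0 vaMf) _.
  rewrite ler_wpM2l ?mulrn_wge0 // ler_pdivrMr // (le_trans small) //.
  by rewrite ler_wpM2l // (le_trans ES) // lerDr.
rewrite big_split /= -mulr_sumr -mulr_suml -/S sumr_const card_ord.
apply: lerD; last by rewrite -mulrA mulr_natl.
by rewrite -[leRHS]mulr1 ler_wpM2l // ler_pdivrMr // mul1r lerDr.
Qed.

Lemma netU_entry (R : realType) d1 d2 d3 (W1 : 'M[R]_(d2, d1)) (W2 : 'M[R]_(d3, d2))
    b x k :
  netU W1 W2 b x k 0 = \sum_i W2 k i * (expR (2 * (W1 *m x + b) i 0) /
    (1 + \sum_j expR (2 * (W1 *m x + b) j 0))).
Proof. by rewrite /netU /sigmaRn mxE; apply: eq_bigr => i _; rewrite mxE. Qed.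

Section rbf_layer.
Variables (R : realType) (d1 N : nat) (lam L : R) (p : 'I_N -> 'cV[R]_d1).

Definition rbf_weights : 'M[R]_(N, d1) := \matrix_(i, j) (lam * p i j 0).

Definition rbf_bias : 'cV[R]_N := \col_i (L - lam * sqnorm2 (p i) / 2).

Lemma expR_rbf_layer x i :
  expR (2 * (rbf_weights *m x + rbf_bias) i 0) =
  expR (lam * sqnorm2 x + 2 * L - lam * sqnorm2 (x - p i)).
Proof.
congr expR; rewrite sqnorm2B !mxE.
under eq_bigr do rewrite mxE -mulrA.
by rewrite -mulr_sumr; field.
Qed.

End rbf_layer.

Lemma div_expR_div_le (R : realType) (a eta : R) :
  0 <= a -> 0 < eta -> a / expR (a / eta) <= eta.
Proof.
move=> a0 eta0; rewrite ler_pdivrMr ?expR_gt0 //.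
apply: le_trans (ler_wpM2l (ltW eta0) (expR_ge1Dx (a / eta))).
by rewrite mulrDr mulr1 mulrC divfK ?gt_eqF // lerDr ltW.
Qed.

Lemma exists_expR_decay_le (R : realType) (a eta g : R) :
  0 <= a -> 0 < eta -> 0 < g ->
  exists2 lam, 0 <= lam & a * expR (- (lam * g)) <= eta.
Proof.
move=> a0 eta0 g0; exists (a / eta / g); first by rewrite !divr_ge0 // ltW.
by rewrite divfK ?gt_eqF // expRN; exact: div_expR_div_le.
Qed.

Lemma netU_approx_entrywise (R : realType) d1 d3 (K : set 'cV[R]_d1)
    (f : 'cV[R]_d1 -> 'cV[R]_d3) :
  compact K -> {within K, continuous f} -> forall e, 0 < e ->
  exists d2 : nat, (0 < d2)%N /\
  exists (W1 : 'M[R]_(d2, d1)) (W2 : 'M[R]_(d3, d2)) (b : 'cV[R]_d2),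
    forall x, K x -> forall k, `|netU W1 W2 b x k 0 - f x k 0| <= e.
Proof.
move=> cK cf e e0.
have [Kne|K0] := pselect (K !=set0); last first.
  by exists 1%N; split => //; exists 0, 0, 0 => x Kx; case: K0; exists x.
have [Mf Mf0 fMf] := compact_mx_entry_bounded (continuous_compact cf cK).
have {}fMf x k : K x -> `|f x k 0| <= Mf by move=> Kx; apply: fMf; exists x.
pose eta := e / 3.
have eta0 : 0 < eta by rewrite divr_gt0.
have [dl dl0 f_unif] := compact_unif_cont cK cf eta0.
pose r := dl / d1.+1%:R.
have r0 : 0 < r by rewrite divr_gt0.
pose rho := d1%:R * r ^+ 2.
have rho_lt : rho < dl ^+ 2.
  have dlr : dl = r * (d1%:R + 1) by rewrite natr1 divfK.
  have d10 : 0 <= d1%:R :> R by [].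
  by rewrite /rho dlr; nra.
pose g := dl ^+ 2 - rho.
have g0 : 0 < g by rewrite subr_gt0.
have [N [N0 [p [pK p_net]]]] := compact_finite_net cK Kne r0.
have NMf0 : 0 <= N%:R * (Mf *+ 2) by rewrite mulr_ge0 // mulrn_wge0 // ltW.
have [lam lam0 far_small] := exists_expR_decay_le NMf0 eta0 g0.
(* [L] makes the weights near [x] at least [expR (Mf / eta)], against the 1 in
   the softmax denominator; [lam] makes the centres farther than [dl] from [x]
   negligible against the nearest one. *)
pose L := (lam * rho + Mf / eta) / 2.
exists N; split => //.
exists (rbf_weights lam p), (\matrix_(k, i) f (p i) k 0), (rbf_bias lam L p).
move=> x Kx k; have [i0 x_near] := p_net x Kx.
have x_i0 : sqnorm2 (x - p i0) <= rho := ball_sqnorm2_le x_near.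
have x_ge0 := sqnorm2_ge0 x.
rewrite netU_entry distrC; under eq_bigr do rewrite mxE.
apply: le_trans (softmax_avg_err (T := expR (Mf / eta)) (tau := expR (- (lam * g)))
  (i0 := i0) _ (ltW eta0) (expR_ge0 _) (fMf _ _ Kx) (fun i => fMf _ _ (pK i))
  (expR_gt0 _) _ _) _.
- by move=> i; exact: expR_ge0.
- by rewrite expR_rbf_layer ler_expR /L; nra.
- move=> i; have [near|far] := ltP (sqnorm2 (x - p i)) (dl ^+ 2).
    left; have := f_unif _ _ (pK i) Kx (sqnorm2_lt_ball dl0 near).
    by move=> /(mx_ballP _ _ eta0)/(_ k 0); rewrite distrC.
  right; rewrite !expR_rbf_layer -expRD ler_expR.
  have : lam * (sqnorm2 (x - p i0) + g) <= lam * sqnorm2 (x - p i).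
    by rewrite ler_wpM2l // /g; lra.
  lra.
have e_eta : e = eta * 3 by rewrite divfK ?pnatr_eq0.
have := div_expR_div_le (ltW Mf0) eta0.
lra.
Qed.

Theorem theorem5 (R : realType) (d1 d3 : nat) (K : set 'cV[R]_d1)
  (f : 'cV[R]_d1 -> 'cV[R]_d3) :
  compact K -> {within K, continuous f} ->
  forall eps : R, 0 < eps ->
  exists d2 : nat, (0 < d2)%N /\
  exists (W1 : 'M[R]_(d2, d1)) (W2 : 'M[R]_(d3, d2)) (b : 'cV[R]_d2),
    (L2K_dist K (netU W1 W2 b) f < eps%:E)%E.
Proof.
move=> cK cf eps eps0.
have [B B0 KB] := compact_mx_entry_bounded cK.
pose V := (B *+ 2) ^+ d1.
have V0 : 0 < V by rewrite exprn_gt0 // mulrn_wgt0.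
pose e := eps / Num.sqrt (d3.+1%:R * V).
have e0 : 0 < e by rewrite divr_gt0 // sqrtr_gt0 mulr_gt0.
have [d2 [d2_gt0 [W1 [W2 [b approx]]]]] := netU_approx_entrywise cK cf e0.
exists d2; split => //; exists W1, W2, b.
apply: (L2K_dist_lt (c := d3%:R * e ^+ 2) B0 KB _ _ _ eps0).
- by rewrite mulr_ge0 // sqr_ge0.
- move=> x Kx; apply: sqnorm2_le_entry_bound => k.
  by rewrite mxE [X in _ + X]mxE; exact: approx.
rewrite -/V /e expr_div_n sqr_sqrtr ?mulr_ge0 ?ltW //.
have -> : d3%:R * (eps ^+ 2 / (d3.+1%:R * V)) * V = eps ^+ 2 * (d3%:R / d3.+1%:R).
  by field; rewrite nat1r pnatr_eq0 /= gt_eqF.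
by rewrite gtr_pMr ?exprn_gt0 // ltr_pdivrMr // mul1r ltr_nat.
Qed.
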